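(* For the fully online fractional matching problem on arbitrary (not necessarily bipartite) graphs, the Water-Filling algorithm is $(2-\sqrt{2})$-competitive: on every instance, the final fractional matching $x$ produced by Water-Filling satisfies $\sum_{e\in E} x_e \ge (2-\sqrt{2})\cdot \mathrm{OPT}$, where $\mathrm{OPT}$ is the maximum size of a matching in $G$.
   Context: Fully online matching model: an undirected graph $G=(V,E)$ is revealed online. Each step is either the arrival or the deadline of a vertex. When a vertex $v$ arrives, all edges between $v$ and previously arrived vertices are revealed. It is assumed that every neighbor of a vertex $v$ arrives before $v$'s deadline. In the fractional version, the algorithm maintains $x_{uv}\in[0,1]$ for each edge with $x_w:=\sum_{z:(w,z)\in E}x_{wz}\le 1$ for every vertex $w$ (the ''water-level'' of $w$); for an edge $(u,v)$ where $u$ has the earlier deadline, $x_{uv}$ may only be increased at $u$'s deadline, and all decisions are irrevocable. Water-Filling: at the deadline of a vertex $u$, let $N(u)$ be the set of neighbors of $u$ whose deadlines have not yet been reached; while $x_u<1$ and $\min_{v\in N(u)}x_v<1$, continuously increase $x_{uv}$ at equal rates for all $v\in\arg\min_{v\in N(u)}x_v$. *)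

From HB Require Import structures.
From mathcomp Require Import all_boot all_order all_algebra.
Set Implicit Arguments. Unset Strict Implicit. Unset Printing Implicit Defensive.
Import Order.TTheory GRing.Theory Num.Theory.
Local Open Scope ring_scope.

Definition simple_graph (V : finType) (E : {set {set V}}) : Prop :=
  forall f, f \in E -> #|f| = 2%N.

Definition is_matching (V : finType) (E M : {set {set V}}) : bool :=
  (M \subset E) &&
  [forall f1 in M, forall f2 in M, (f1 != f2) ==> [disjoint f1 & f2]].

Definition max_matching_size (V : finType) (E : {set {set V}}) : nat :=
  \max_(M : {set {set V}} | is_matching E M) #|M|.

Definition arrival (V : Type) (v : V) : V * bool := (v, true).
Definition deadline (V : Type) (v : V) : V * bool := (v, false).

Definition valid_instance (V : finType) (E : {set {set V}}) (sigma : seq (V * bool))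
  : Prop :=
  [/\ uniq sigma,
      (forall v, arrival v \in sigma /\ deadline v \in sigma),
      (forall v, (index (arrival v) sigma < index (deadline v) sigma)%N) &
      (forall u v, [set u; v] \in E ->
          (index (arrival v) sigma < index (deadline u) sigma)%N)].

(* A fractional assignment x_f for each edge f = {u,v} (values off E are irrelevant). *)
Definition fassign (R : numDomainType) (V : finType) := {set V} -> R.

Definition level (R : numDomainType) (V : finType) (E : {set {set V}})
  (x : fassign R V) (w : V) : R :=
  \sum_(f in E | w \in f) x f.

Definition wf_raise (R : realDomainType) (V : finType) (E : {set {set V}})
  (u : V) (N : {set V}) (x : fassign R V) (h : R) : fassign R V :=
  fun f => x f + \sum_(v in N | f == [set u; v])
                    (Num.max (level E x v) h - level E x v).

(* One Water-Filling step at the deadline of u, where N is the set of neighbours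
   of u whose deadlines have not been reached.  The continuous process (raise the
   minimum-level neighbours at equal rates while x_u < 1 and min_{v in N} x_v < 1)
   ends with every v in N at level max(x_v, h) for a common height h, and it stops
   exactly when either x_u reaches 1 (total increase = 1 - x_u, with h <= 1) or
   all neighbours reach level 1 (h = 1, total increase <= 1 - x_u). *)
Definition wf_step (R : realDomainType) (V : finType) (E : {set {set V}})
  (u : V) (N : {set V}) (x x' : fassign R V) : Prop :=
  exists h : R,
    let inc := \sum_(v in N) (Num.max (level E x v) h - level E x v) in
    ((inc = 1 - level E x u /\ h <= 1) \/ (h = 1 /\ inc <= 1 - level E x u)) /\
    x' = wf_raise E u N x h.

Inductive wf_exec (R : realDomainType) (V : finType) (E : {set {set V}})
  : seq (V * bool) -> fassign R V -> fassign R V -> Prop :=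
| wf_exec_nil x : wf_exec E [::] x x
| wf_exec_arr v s x y : wf_exec E s x y -> wf_exec E ((v, true) :: s) x y
| wf_exec_dl u s x x' y :
    wf_step E u [set v | ([set u; v] \in E) && ((v, false) \in s)] x x' ->
    wf_exec E s x' y -> wf_exec E ((u, false) :: s) x y.

Definition water_filling_output (R : realDomainType) (V : finType)
  (E : {set {set V}}) (sigma : seq (V * bool)) (x : fassign R V) : Prop :=
  wf_exec E sigma (fun _ => 0) x.

From HB Require Import structures.
From mathcomp Require Import all_boot all_order all_algebra.
From mathcomp Require Import ring lra.
Set Implicit Arguments. Unset Strict Implicit. Unset Printing Implicit Defensive.
Import Order.TTheory GRing.Theory Num.Theory.
Local Open Scope ring_scope.

(* A charging argument.  Vertex duals [al] are maintained with
   [\sum al = \sum x].  At the deadline of u, when the level of a pending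
   neighbour v rises from l to h, v is paid pot h - pot l and u is paid the
   rest of the water; since pot' = pot_slope is increasing, u gets at least
   1 - pot_slope h per unit.  Hence a vertex whose deadline is pending keeps
   dual at least pot of its level, and after the deadline of u either u is
   full or all its pending neighbours reach level 1; in both cases
   al u + al v >= 2 - sqrt 2 for every neighbour v ([pot_cover]).  The duals
   thus form a fractional vertex cover of value 2 - sqrt 2, which bounds
   every matching. *)

Lemma big_pred_sub1 (R : Type) (idx : R) (op : Monoid.law idx) (I : finType)
  (P : pred I) (j : I) (F : I -> R) :
  (forall i, P i -> i = j) -> \big[op/idx]_(i | P i) F i = if P j then F j else idx.
Proof.
move=> Pj_only; case Pj: (P j).
  by rewrite (big_pred1 j) // => i; apply/idP/eqP => [/Pj_only | ->].
rewrite big_pred0 // => i; apply/negbTE/negP => Pi.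
by move: Pj; rewrite -(Pj_only _ Pi) Pi.
Qed.

Lemma max_matching_le_cover (R : realDomainType) (V : finType) (E : {set {set V}})
  (al : V -> R) (c : R) :
  simple_graph E -> (forall w, 0 <= al w) -> 0 <= c ->
  (forall a b, [set a; b] \in E -> c <= al a + al b) ->
  c * (max_matching_size E)%:R <= \sum_w al w.
Proof.
move=> simpleE al_ge0 c_ge0 c_le_edge.
rewrite /max_matching_size; elim/big_ind: _ => //.
- by rewrite mulr0 sumr_ge0.
- by move=> m n hm hn; rewrite /maxn; case: ifP.
move=> M /andP[ME /forall_inP disjM].
have trivM : trivIset M.
  apply/trivIsetP => A B AM BM AB.
  by move: (disjM A AM) => /forall_inP /(_ B BM) /implyP; apply.
have -> : c * #|M|%:R = \sum_(f in M) c by rewrite sumr_const mulr_natr.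
apply: (@le_trans _ _ (\sum_(f in M) \sum_(w in f) al w)).
  apply: ler_sum => f fM.
  have fE : f \in E by apply: (subsetP ME).
  have /eqP/cards2P [a [b [ab fab]]] := simpleE f fE.
  rewrite fab in fE *.
  rewrite big_setU1 ?big_set1 ?in_set1 //=.
  exact: c_le_edge.
rewrite -big_trivIset // [X in _ <= X](bigID (fun w => w \in cover M)) /= lerDl.
exact: sumr_ge0.
Qed.

Lemma sum_wf_raise (R : realDomainType) (V : finType) (E : {set {set V}}) (u : V)
  (N : {set V}) (x : fassign R V) (h : R) (P : pred {set V}) :
  \sum_(f | P f) wf_raise E u N x h f =
  \sum_(f | P f) x f + \sum_(v in N | P [set u; v]) (Num.max (level E x v) h - level E x v).
Proof.
rewrite /wf_raise big_split /=; congr (_ + _).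
rewrite (exchange_big_dep [in N]) /=; last by move=> f v _ /andP[].
rewrite [RHS]big_mkcondr /=; apply: eq_bigr => v vN.
rewrite (big_pred_sub1 _ (j := [set u; v])); last by move=> f /andP[_ /andP[_ /eqP]].
by rewrite eqxx vN !andbT.
Qed.

Lemma level_wf_raise (R : realDomainType) (V : finType) (E : {set {set V}}) (u w : V)
  (N : {set V}) (x : fassign R V) (h : R) :
  w != u -> (forall v, v \in N -> [set u; v] \in E) ->
  level E (wf_raise E u N x h) w =
  level E x w + (if w \in N then Num.max (level E x w) h - level E x w else 0).
Proof.
move=> wu NE; rewrite /level sum_wf_raise; congr (_ + _).
rewrite (big_pred_sub1 _ (j := w)); last first.
  by move=> v /andP[vN /andP[_]]; rewrite in_set2 (negbTE wu) /= => /eqP.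
case wN: (w \in N) => //=.
by rewrite in_set2 eqxx orbT andbT NE.
Qed.

Section Potential.
Variable R : rcfType.
Local Notation r := (Num.sqrt (2 : R)).

Definition pot (y : R) : R := y - r * y / 2 + r * y ^+ 2 / 4.
Definition pot_slope (y : R) : R := 1 - r * (1 - y) / 2.

Lemma sqrt2_sqr : r * r = 2.
Proof. by rewrite -expr2 sqr_sqrtr // ler0n. Qed.

Lemma sqrt2_gt0 : 0 < r.
Proof. by rewrite sqrtr_gt0 ltr0n. Qed.

Lemma pot_le (y z : R) : 0 <= y -> y <= z -> pot y <= pot z.
Proof.
move=> y_ge0 yz; have r2 := sqrt2_sqr; have r_gt0 := sqrt2_gt0; rewrite /pot.
have r_le2 : r <= 2 by nra.
have : 0 <= r * (y + z) by apply: mulr_ge0; lra.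
nra.
Qed.

Lemma pot_sub_le (y z : R) : y <= z -> pot z - pot y <= pot_slope z * (z - y).
Proof.
move=> yz; have r_gt0 := sqrt2_gt0; rewrite /pot /pot_slope.
have : 0 <= r * (z - y) ^+ 2 by apply: mulr_ge0; [lra | apply: sqr_ge0].
nra.
Qed.

Lemma pot_slope_le1 (y : R) : y <= 1 -> pot_slope y <= 1.
Proof.
move=> y_le1; have r_gt0 := sqrt2_gt0; rewrite /pot_slope.
have : 0 <= r * (1 - y) by apply: mulr_ge0; lra.
lra.
Qed.

Lemma pot1_ge : 2 - r <= pot 1.
Proof. have r2 := sqrt2_sqr; have r_gt0 := sqrt2_gt0; rewrite /pot; nra. Qed.

(* The defining property of [pot]: the minimum over [a, h] of the left side
   is attained at [a + h = 2 - r]. *)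
Lemma pot_cover (a h : R) : 2 - r <= pot a + (1 - pot_slope h) * (1 - a) + pot h.
Proof.
have r2 := sqrt2_sqr; have r_gt0 := sqrt2_gt0; rewrite /pot /pot_slope.
have : 0 <= r * (a + h + r - 2) ^+ 2 by apply: mulr_ge0; [lra | apply: sqr_ge0].
have e1 : r * r * a = 2 * a by rewrite r2.
have e2 : r * r * h = 2 * h by rewrite r2.
have e3 : r * r * r = 2 * r by rewrite r2.
nra.
Qed.

Lemma pot_raise_le (l h : R) :
  0 <= l -> pot (Num.max l h) - pot l <= pot_slope (Num.max h 0) * (Num.max l h - l).
Proof.
move=> l_ge0; case: (lerP h l) => [hl | lh].
  by rewrite !subrr mulr0.
have -> : Num.max h 0 = h by apply: max_l; apply: le_trans (ltW lh).
exact/pot_sub_le/ltW.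
Qed.

Lemma pot_cover_raise (a l h : R) : 0 <= l ->
  2 - r <= pot a + (1 - pot_slope (Num.max h 0)) * (1 - a) + pot (Num.max l h).
Proof.
move=> l_ge0; have := pot_cover a (Num.max h 0).
have : pot (Num.max h 0) <= pot (Num.max l h).
  apply: pot_le; first by rewrite le_max lexx orbT.
  by rewrite ge_max !le_max lexx l_ge0 orbT.
lra.
Qed.

End Potential.

Definition wf_dual_inv (R : rcfType) (V : finType) (E : {set {set V}})
  (s : seq (V * bool)) (x : fassign R V) (al : V -> R) : Prop :=
  [/\ forall f, 0 <= x f,
      forall w, 0 <= al w,
      \sum_w al w = \sum_(f in E) x f,
      forall w, (w, false) \in s -> pot (level E x w) <= al w &
      forall a b, [set a; b] \in E -> ((a, false) \notin s) || ((b, false) \notin s) ->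
        2 - Num.sqrt 2 <= al a + al b].

Section WaterFillingStep.
Variables (R : rcfType) (V : finType) (E : {set {set V}}).
Hypothesis simpleE : simple_graph E.
Variables (u : V) (s : seq (V * bool)) (x : fassign R V) (al : V -> R) (h : R).
Hypothesis u_notin_s : (u, false) \notin s.
Hypothesis inv_x : wf_dual_inv E ((u, false) :: s) x al.

Let N := [set v | ([set u; v] \in E) && ((v, false) \in s)].
Let raise v := Num.max (level E x v) h - level E x v.
Let inc := \sum_(v in N) raise v.
Hypothesis wf_stop :
  (inc = 1 - level E x u /\ h <= 1) \/ (h = 1 /\ inc <= 1 - level E x u).

Let charge v := pot (Num.max (level E x v) h) - pot (level E x v).
Let gain := inc - \sum_(v in N) charge v.
Let al' w := al w + (if w \in N then charge w else 0) + (if w == u then gain else 0).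

Let x_ge0 f : 0 <= x f. Proof. by case: inv_x. Qed.
Let al_ge0 w : 0 <= al w. Proof. by case: inv_x. Qed.

Let level_ge0 w : 0 <= level E x w.
Proof. by apply: sumr_ge0 => f _; apply: x_ge0. Qed.

Let h_le1 : h <= 1.
Proof. by case: wf_stop => [[]|[->]]. Qed.

Let raise_ge0 v : 0 <= raise v.
Proof. by rewrite subr_ge0 le_max lexx. Qed.

Let charge_ge0 v : 0 <= charge v.
Proof. by rewrite subr_ge0 pot_le // le_max lexx. Qed.

Let gain_ge : (1 - pot_slope (Num.max h 0)) * inc <= gain.
Proof.
have : \sum_(v in N) charge v <= pot_slope (Num.max h 0) * inc.
  by rewrite mulr_sumr; apply: ler_sum => v _; apply: pot_raise_le.
rewrite /gain; lra.
Qed.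

Let gain_ge0 : 0 <= gain.
Proof.
apply: le_trans gain_ge; apply: mulr_ge0; last exact: sumr_ge0.
by rewrite subr_ge0 pot_slope_le1 // ge_max h_le1 ler01.
Qed.

Let N_edge v : v \in N -> [set u; v] \in E.
Proof. by rewrite inE => /andP[]. Qed.

Let N_neq_u v : v \in N -> v != u.
Proof.
by rewrite inE => /andP[_ vs]; apply: contraNneq u_notin_s => <-.
Qed.

Let al_le w : al w <= al' w.
Proof.
by rewrite /al' -addrA lerDl addr_ge0 //; case: ifP.
Qed.

Let sum_al' : \sum_w al' w = \sum_w al w + inc.
Proof.
rewrite /al' !big_split /= -!big_mkcond big_pred1_eq /gain.
by rewrite -addrA [X in _ + X]addrC subrK.
Qed.

Let sum_x' : \sum_(f in E) wf_raise E u N x h f = \sum_(f in E) x f + inc.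
Proof.
rewrite sum_wf_raise; congr (_ + _); apply: eq_bigl => v.
by case: (boolP (v \in N)) => // /N_edge ->.
Qed.

Let alive_pot_le w : (w, false) \in s ->
  pot (level E (wf_raise E u N x h) w) <= al' w.
Proof.
move=> ws; have [_ _ _ alive _] := inv_x.
have := alive w; rewrite in_cons ws orbT => /(_ isT).
have wu : w != u by apply: contraNneq u_notin_s => <-.
rewrite level_wf_raise // /al' (negbTE wu) addr0.
case: ifP => _; last by rewrite !addr0.
by rewrite addrC subrK /charge; lra.
Qed.

Let cover_u b : b \in N -> 2 - Num.sqrt 2 <= al' u + al' b.
Proof.
move=> bN; have [_ _ _ alive _] := inv_x.
have al'_u : pot (level E x u) + gain <= al' u.
  have uN : u \notin N by apply/negP => /N_neq_u; rewrite eqxx.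
  by rewrite /al' eqxx (negbTE uN) addr0 lerD2r alive ?mem_head.
have al'_b : pot (Num.max (level E x b) h) <= al' b.
  have bs : (b, false) \in s by move: bN; rewrite inE => /andP[].
  have := alive b; rewrite in_cons bs orbT => /(_ isT).
  by rewrite /al' bN (negbTE (N_neq_u bN)) addr0 /charge; lra.
case: wf_stop => [[inc_eq _] | [h1 _]].
  have := pot_cover_raise (level E x u) h (level_ge0 b).
  by rewrite -inc_eq; move: al'_u al'_b gain_ge; lra.
have : pot 1 <= pot (Num.max (level E x b) h).
  by rewrite h1; apply: pot_le => //; rewrite le_max lexx orbT.
have := pot1_ge R; have := al_ge0 u; have := al_le u; lra.
Qed.

Let cover_dead a b : [set a; b] \in E -> (a, false) \notin s ->
  (a, false) \in (u, false) :: s -> (b, false) \in (u, false) :: s ->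
  2 - Num.sqrt 2 <= al' a + al' b.
Proof.
move=> ab as' au_s bu_s.
have au : a = u by move: au_s; rewrite in_cons (negbTE as') orbF => /eqP [].
subst a; move: bu_s; rewrite in_cons => /orP[/eqP [bu] | bs].
  by have := simpleE ab; rewrite bu setUid cards1.
by apply: cover_u; rewrite inE ab bs.
Qed.

Lemma wf_dual_inv_step : wf_dual_inv E s (wf_raise E u N x h) al'.
Proof.
have [_ _ sum_eq _ cover] := inv_x.
split=> //.
- by move=> f; rewrite addr_ge0 ?x_ge0 //; apply: sumr_ge0 => v _; apply: raise_ge0.
- by move=> w; apply: le_trans (al_le w).
- by rewrite sum_al' sum_x' sum_eq.
move=> a b ab ab_dead.
have [dead_before | alive_before] :=
  boolP (((a, false) \notin (u, false) :: s) || ((b, false) \notin (u, false) :: s)).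
  exact: le_trans (cover a b ab dead_before) (lerD (al_le a) (al_le b)).
move: alive_before; rewrite negb_or !negbK => /andP[a_us b_us].
case/orP: ab_dead => [as' | bs']; first exact: cover_dead.
by rewrite [al' a + _]addrC; apply: cover_dead; rewrite // setUC.
Qed.

End WaterFillingStep.

Lemma wf_exec_dual_inv (R : rcfType) (V : finType) (E : {set {set V}})
  (s : seq (V * bool)) (x y : fassign R V) (al : V -> R) :
  simple_graph E -> wf_exec E s x y -> uniq s -> wf_dual_inv E s x al ->
  exists al', wf_dual_inv E [::] y al'.
Proof.
move=> simpleE exec; elim: exec al => {s x y}.
- by move=> x al _ inv; exists al.
- move=> v s x y _ IH al /andP[_ us] [x_ge0 al_ge0 sum_eq alive cover].
  apply: (IH al us); split=> // [w ws | a b ab ab_dead].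
    by apply: alive; rewrite in_cons ws orbT.
  by apply: cover; rewrite // !in_cons !xpair_eqE !andbF.
- move=> u s x x' y [h [stop ->]] _ IH al /andP[us uniq_s] inv.
  exact: IH _ uniq_s (wf_dual_inv_step simpleE us inv stop).
Qed.

Theorem theorem3p1 (R : rcfType) (V : finType) (E : {set {set V}})
  (sigma : seq (V * bool)) (x : fassign R V) :
  simple_graph E ->
  valid_instance E sigma ->
  water_filling_output E sigma x ->
  (2 - Num.sqrt 2) * (max_matching_size E)%:R <= \sum_(f in E) x f.
Proof.
move=> simpleE [uniq_sigma has_events _ _] wf_out.
have inv0 : wf_dual_inv E sigma (fun _ => 0 : R) (fun _ => 0 : R).
  split=> //.
  - by rewrite !big1.
  - by move=> w _; rewrite /level big1 // /pot; lra.
  - move=> a b _; have [_ a_dl] := has_events a; have [_ b_dl] := has_events b.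
    by rewrite /deadline in a_dl b_dl; rewrite a_dl b_dl.
have [al [_ al_ge0 sum_eq _ cover]] := wf_exec_dual_inv simpleE wf_out uniq_sigma inv0.
rewrite -sum_eq; apply: max_matching_le_cover => // [|a b ab]; last exact: cover.
have := sqrt2_sqr R; have := sqrt2_gt0 R; nra.
Qed.
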